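(* The set $\{[L,l] : (L,l)\text{ a pointed image-finite labelled transition system}\}$ is a subset of $\mathbb{X}=\max(\mathbb{D})$ and is dense in $(\mathbb{X},\tau_{\mathbb{X}})$.
   Context: Fix a finite set $\mathrm{Act}$ of events. A mixed transition system is $M=(\Sigma,R^a,R^c)$ with $R^a,R^c\subseteq\Sigma\times\mathrm{Act}\times\Sigma$; it is a modal transition system if $R^a\subseteq R^c$; a labelled transition system $(\Sigma,R)$ is identified with $(\Sigma,R,R)$. $M$ is image-finite if for all $s,\alpha$ and $m\in\{a,c\}$ the set $\{s' : (s,\alpha,s')\in R^m\}$ is finite; pointed systems have a designated state. A relation $Q\subseteq\Sigma\times\Sigma$ is a refinement within $M$ if $(s,t)\in Q$ implies, for all $\alpha$: (i) whenever $(s,\alpha,s')\in R^a$ there is $(t,\alpha,t')\in R^a$ with $(s',t')\in Q$; (ii) whenever $(t,\alpha,t')\in R^c$ there is $(s,\alpha,s')\in R^c$ with $(s',t')\in Q$. For pointed systems, $(N,j)$ refines $(M,i)$ if some refinement within the disjoint union contains $(i,j)$; refinement-equivalent means both directions. Domain theory: $K(D)$ denotes compact elements of a dcpo; bifinite (SFP) domains are algebraic dcpos where, for finite $F\subseteq K(D)$, iterated minimal-upper-bound sets are finite and in $K(D)$ and every upper bound of $F$ is above a minimal upper bound. Scott topology: sets $U={\uparrow}(U\cap K(D))$; Lawson topology generated by ${\uparrow}k\setminus{\uparrow}l$, $k,l\in K(D)$. Mixed powerdomain $\mathcal{M}(D)$: pairs $(L,U)$, $L$ Scott-closed, $U$ Lawson-closed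 upper, $L={\downarrow}(L\cap U)$, ordered by $L\subseteq L'$ and $U'\subseteq U$. $\mathbb{D}$ is the initial solution over bifinite domains of $\mathbb{D}\cong\prod_{\alpha\in\mathrm{Act}}\mathcal{M}(\mathbb{D})$, $d=((L^d_\alpha,U^d_\alpha))_\alpha$, viewed as the mixed transition system with $(d,\alpha,d')\in\mathbb{R}^a$ iff $d'\in L^d_\alpha$ and $(d,\alpha,d')\in\mathbb{R}^c$ iff $d'\in U^d_\alpha$; its order equals the greatest refinement relation within this system. $\mathbb{X}=\max(\mathbb{D})$, $\tau_{\mathbb{X}}=\{U\cap\mathbb{X} : U\text{ Scott-open}\}$. For each image-finite pointed modal transition system $(M,i)$, $[M,i]$ denotes the unique element of $\mathbb{D}$ such that $(\mathbb{D},[M,i])$ and $(M,i)$ are refinement-equivalent. *)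

From Stdlib Require Import List.
Import ListNotations.

Set Implicit Arguments.
Set Universe Polymorphism.

Definition finite_type (T : Type) : Prop := exists l : list T, forall x, In x l.
Definition finite_set {T : Type} (A : T -> Prop) : Prop :=
  exists l : list T, forall x, A x -> In x l.
Definition set_eq {T : Type} (A B : T -> Prop) : Prop := forall x, A x <-> B x.

Section TS.
Variable Act : Type.

(** a mixed transition system on a state type [S] is a pair (Ra, Rc) *)
Definition rel (S : Type) := S -> Act -> S -> Prop.

Definition is_modal {S : Type} (Ra Rc : rel S) : Prop :=
  forall s a s', Ra s a s' -> Rc s a s'.

Definition image_finite {S : Type} (Ra Rc : rel S) : Prop :=
  forall s a, finite_set (Ra s a) /\ finite_set (Rc s a).

Definition refinement_within {S : Type} (Ra Rc : rel S) (Q : S -> S -> Prop) : Prop :=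
  forall s t, Q s t -> forall a,
    (forall s', Ra s a s' -> exists t', Ra t a t' /\ Q s' t') /\
    (forall t', Rc t a t' -> exists s', Rc s a s' /\ Q s' t').

Definition sum_rel {S1 S2 : Type} (R1 : rel S1) (R2 : rel S2) : rel (S1 + S2) :=
  fun x a y =>
    match x, y with
    | inl s, inl s' => R1 s a s'
    | inr t, inr t' => R2 t a t'
    | _, _ => False
    end.

(** [refines Ma Mc i Na Nc j] : (N, j) refines (M, i) *)
Definition refines {S1 S2 : Type} (Ma Mc : rel S1) (i : S1) (Na Nc : rel S2) (j : S2) : Prop :=
  exists Q : (S1 + S2) -> (S1 + S2) -> Prop,
    refinement_within (sum_rel Ma Na) (sum_rel Mc Nc) Q /\ Q (inl i) (inr j).

Definition refinement_equiv {S1 S2 : Type} (Ma Mc : rel S1) (i : S1) (Na Nc : rel S2) (j : S2) : Prop :=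
  refines Ma Mc i Na Nc j /\ refines Na Nc j Ma Mc i.

End TS.

Section Domain.
Variable D : Type.
Variable le : D -> D -> Prop.

Definition partial_order : Prop :=
  (forall x, le x x) /\ (forall x y z, le x y -> le y z -> le x z) /\
  (forall x y, le x y -> le y x -> x = y).

Definition upper_bound (A : D -> Prop) (u : D) : Prop := forall x, A x -> le x u.
Definition is_sup (A : D -> Prop) (s : D) : Prop :=
  upper_bound A s /\ forall u, upper_bound A u -> le s u.
Definition directed (A : D -> Prop) : Prop :=
  (exists x, A x) /\ forall x y, A x -> A y -> exists z, A z /\ le x z /\ le y z.
Definition dcpo : Prop := forall A, directed A -> exists s, is_sup A s.

Definition compact (k : D) : Prop :=
  forall A s, directed A -> is_sup A s -> le k s -> exists x, A x /\ le k x.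

Definition algebraic : Prop :=
  forall x, directed (fun k => compact k /\ le k x) /\ is_sup (fun k => compact k /\ le k x) x.

Definition up (A : D -> Prop) : D -> Prop := fun x => exists a, A a /\ le a x.
Definition down (A : D -> Prop) : D -> Prop := fun x => exists a, A a /\ le x a.
Definition upper_set (A : D -> Prop) : Prop := forall x y, A x -> le x y -> A y.

Definition mub (F : list D) (x : D) : Prop :=
  upper_bound (fun y => In y F) x /\
  forall y, upper_bound (fun z => In z F) y -> le y x -> y = x.
Definition mub_step (A : D -> Prop) : D -> Prop :=
  fun x => exists G : list D, (forall g, In g G -> A g) /\ mub G x.
Fixpoint mub_iter (F : list D) (n : nat) : D -> Prop :=
  match n with
  | O => fun x => In x F
  | S n => mub_step (mub_iter F n)
  end.
Definition mub_closure (F : list D) : D -> Prop := fun x => exists n, mub_iter F n x.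

Definition bifinite : Prop :=
  partial_order /\ dcpo /\ algebraic /\
  forall F : list D, (forall k, In k F -> compact k) ->
    finite_set (mub_closure F) /\
    (forall x, mub_closure F x -> compact x) /\
    (forall u, upper_bound (fun y => In y F) u -> exists m, mub F m /\ le m u).

Definition scott_open (U : D -> Prop) : Prop :=
  set_eq U (up (fun k => U k /\ compact k)).
Definition scott_closed (L : D -> Prop) : Prop := scott_open (fun x => ~ L x).

Definition lawson_subbasic (k l : D) : D -> Prop := fun x => le k x /\ ~ le l x.
Definition lawson_open (U : D -> Prop) : Prop :=
  forall x, U x -> exists P : list (D * D),
    (forall p, In p P -> compact (fst p) /\ compact (snd p)) /\
    (forall p, In p P -> lawson_subbasic (fst p) (snd p) x) /\
    (forall y, (forall p, In p P -> lawson_subbasic (fst p) (snd p) y) -> U y).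
Definition lawson_closed (U : D -> Prop) : Prop := lawson_open (fun x => ~ U x).

Definition mixed_pd_elem (LU : (D -> Prop) * (D -> Prop)) : Prop :=
  let (L, U) := LU in
  scott_closed L /\ lawson_closed U /\ upper_set U /\
  set_eq L (down (fun x => L x /\ U x)).

Definition mixed_pd_le (LU LU' : (D -> Prop) * (D -> Prop)) : Prop :=
  (forall x, fst LU x -> fst LU' x) /\ (forall x, snd LU' x -> snd LU x).

Definition least (d : D) : Prop := forall e, le d e.
Definition maximal (d : D) : Prop := forall e, le d e -> e = d.

End Domain.

(** [unf d a = (L^d_a, U^d_a)].  [unf] is an order isomorphism from D onto
   Π_a M(D) (with extensional equality of sets).  Initiality (among bifinite
   solutions) is expressed by the standard minimality property of the
   limit–colimit construction: the compact elements of D are exactly the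
   images of the finite approximants D_n, i.e. [Kn 0] = {⊥} and [Kn (n+1)]
   consists of the d whose components are (↓A, ↑B) with A, B finite subsets
   of [Kn n]. *)
Section Solution.
Variable Act : Type.
Variable D : Type.
Variable le : D -> D -> Prop.
Variable unf : D -> Act -> (D -> Prop) * (D -> Prop).

Fixpoint Kn (n : nat) : D -> Prop :=
  match n with
  | O => fun d => least le d
  | S n => fun d => forall a, exists A B : list D,
      (forall x, In x A -> Kn n x) /\ (forall x, In x B -> Kn n x) /\
      set_eq (fst (unf d a)) (down le (fun x => In x A)) /\
      set_eq (snd (unf d a)) (up le (fun x => In x B))
  end.

Definition is_initial_solution : Prop :=
  bifinite le /\
  (forall d a, mixed_pd_elem le (unf d a)) /\
  (forall f : Act -> (D -> Prop) * (D -> Prop),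
      (forall a, mixed_pd_elem le (f a)) ->
      exists d, forall a, set_eq (fst (unf d a)) (fst (f a)) /\
                          set_eq (snd (unf d a)) (snd (f a))) /\
  (forall d e, le d e <-> forall a, mixed_pd_le (unf d a) (unf e a)) /\
  (forall d, compact le d <-> exists n, Kn n d).

Definition DRa : rel Act D := fun d a d' => fst (unf d a) d'.
Definition DRc : rel Act D := fun d a d' => snd (unf d a) d'.

(** d = [L, l] for some pointed image-finite labelled transition system (L, l):
    (D, d) and (L, l) are refinement-equivalent, where the LTS (S, R) is
    identified with the mixed system (S, R, R). *)
Definition is_LTS_point (d : D) : Prop :=
  exists (S : Type) (R : rel Act S) (l : S),
    image_finite R R /\ refinement_equiv DRa DRc d R R l.

End Solution.

From Stdlib Require Import List Classical ClassicalEpsilon.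
Import ListNotations.

(* If (D, d) refines an LTS state l and d <= e, then (D, e) refines l
   too.  A compact k <= e lies in some K_n; since must and may transitions of an
   LTS coincide, l refines (D, k) up to depth n, and composing with the
   refinement of l by d gives k <= d.  By algebraicity e <= d.

   A Scott-open U containing x contains a compact k in K_n below x.
   By induction on n, every bounded finite subset of K_n lies below the image
   of a synchronisation tree of depth n, i.e. an element whose a-components are
   (↓ds, ↑ds) for a list ds of images of trees of depth n - 1: for each
   generator of a must-component, the induction hypothesis yields a tree above
   it and above generators of all the may-components involved.  Such images
   are LTS points (the tree itself is the LTS), and U is an upper set. *)

Set Implicit Arguments.

Lemma list_choice {A B : Type} (Q : B -> Prop) (P : A -> B -> Prop) (F : list A) :
  (forall x, In x F -> exists b, Q b /\ P x b) ->
  exists G, (forall b, In b G -> Q b) /\ (forall x, In x F -> exists b, In b G /\ P x b).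
Proof.
  induction F as [|x F IH]; intros H.
  - exists []. split; intros; contradiction.
  - destruct (H x (or_introl eq_refl)) as [b [Qb Pb]].
    destruct IH as [G [HG HFG]]; [intros y Hy; apply H; right; exact Hy|].
    exists (b :: G). split.
    + intros c [<-|Hc]; auto.
    + intros y [<-|Hy].
      * exists b. split; [left|]; auto.
      * destruct (HFG y Hy) as [c [Hc Pc]]. exists c. split; [right|]; auto.
Qed.

Section Refinement.
Variable Act : Type.

Definition refinement_between {S1 S2 : Type} (Ma Mc : rel Act S1) (Na Nc : rel Act S2)
    (P : S1 -> S2 -> Prop) : Prop :=
  forall s t, P s t -> forall a,
    (forall s', Ma s a s' -> exists t', Na t a t' /\ P s' t') /\
    (forall t', Nc t a t' -> exists s', Mc s a s' /\ P s' t').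

Lemma refinesP {S1 S2 : Type} (Ma Mc : rel Act S1) (i : S1) (Na Nc : rel Act S2) (j : S2) :
  refines Ma Mc i Na Nc j <-> exists P, refinement_between Ma Mc Na Nc P /\ P i j.
Proof.
  split.
  - intros [Q [HQ Hij]]. exists (fun s t => Q (inl s) (inr t)). split; [|exact Hij].
    intros s t Hst a. destruct (HQ _ _ Hst a) as [Hfwd Hbwd]. split.
    + intros s' Hs'. destruct (Hfwd (inl s') Hs') as [[s''|t'] [Ht' HQ']]; [contradiction|].
      exists t'. split; assumption.
    + intros t' Ht'. destruct (Hbwd (inr t') Ht') as [[s'|t''] [Hs' HQ']]; [|contradiction].
      exists s'. split; assumption.
  - intros [P [HP Hij]].
    exists (fun p q => match p, q with inl s, inr t => P s t | _, _ => False end).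
    split; [|exact Hij].
    intros [s|s] [t|t] Hst a; try contradiction.
    destruct (HP s t Hst a) as [Hfwd Hbwd]. split.
    + intros [s'|s'] Hs'; [|contradiction]. destruct (Hfwd s' Hs') as [t' [Ht' HP']].
      exists (inr t'). split; assumption.
    + intros [t'|t'] Ht'; [contradiction|]. destruct (Hbwd t' Ht') as [s' [Hs' HP']].
      exists (inl s'). split; assumption.
Qed.

End Refinement.

Section DomainFacts.
Variables (D : Type) (le : D -> D -> Prop).
Hypothesis le_po : partial_order le.
Hypothesis le_alg : algebraic le.

Let le_trans : forall x y z, le x y -> le y z -> le x z := proj1 (proj2 le_po).

Lemma directed_below_list (ds : list D) (C : D -> Prop) :
  directed le C -> (forall k, C k -> down le (fun y => In y ds) k) ->
  exists y, In y ds /\ upper_bound le C y.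
Proof.
  revert C. induction ds as [|a ds IH]; intros C [[k0 Ck0] Cdir] Hcov.
  - destruct (Hcov k0 Ck0) as [y [[] _]].
  - destruct (classic (upper_bound le C a)) as [Ha|Ha]; [exists a; split; [left|]; auto|].
    apply not_all_ex_not in Ha as [k1 Hk1]. apply imply_to_and in Hk1 as [Ck1 Nk1].
    (* the elements of [C] above [k1] are cofinal in [C] and avoid [↓a] *)
    destruct (IH (fun k => C k /\ le k1 k)) as [y [Hy Hyub]].
    + split; [exists k1; split; [exact Ck1|apply le_po]|].
      intros x y [Cx Hx] [Cy Hy]. destruct (Cdir x y Cx Cy) as [z [Cz [Hxz Hyz]]].
      exists z. split; [split; [exact Cz|eauto]|auto].
    + intros k [Ck Hk]. destruct (Hcov k Ck) as [y [[<-|Hy] Hky]].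
      * exfalso. apply Nk1. eauto.
      * exists y. auto.
    + exists y. split; [right; exact Hy|].
      intros k Ck. destruct (Cdir k k1 Ck Ck1) as [z [Cz [Hkz Hk1z]]].
      apply (le_trans Hkz). apply Hyub. split; assumption.
Qed.

Lemma compact_not_le (y x : D) : ~ le y x -> exists l, compact le l /\ le l y /\ ~ le l x.
Proof.
  intros Hyx. apply NNPP. intro Hn. apply Hyx.
  apply (proj2 (proj2 (le_alg y))). intros k [Hk Hky].
  apply NNPP. intro Hkx. apply Hn. exists k. auto.
Qed.

Lemma scott_closed_down_list (ds : list D) : scott_closed le (down le (fun y => In y ds)).
Proof.
  intro x. split.
  - intro Hx. apply NNPP. intro Hno. apply Hx.
    destruct (le_alg x) as [Hdir Hsup].
    destruct (directed_below_list ds Hdir) as [y [Hy Hub]].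
    { intros k [Hk Hkx]. apply NNPP. intro Hn. apply Hno. exists k. auto. }
    exists y. split; [exact Hy|apply (proj2 Hsup), Hub].
  - intros [k [[Hk _] Hkx]] [y [Hy Hxy]]. apply Hk. exists y. eauto.
Qed.

Lemma lawson_closed_up_list (ds : list D) : lawson_closed le (up le (fun y => In y ds)).
Proof.
  intros x Hx.
  destruct (le_alg x) as [[[k0 [Hk0 Hk0x]] _] _].
  destruct (list_choice (fun l => compact le l /\ ~ le l x) (fun y l => le l y) ds)
    as [G [HG Hcov]].
  { intros y Hy. assert (Hyx : ~ le y x) by (intro Hyx; apply Hx; exists y; auto).
    destruct (compact_not_le Hyx) as [l [Hl [Hly Hlx]]]. exists l. auto. }
  exists (map (pair k0) G). split; [|split].
  - intros p Hp. apply in_map_iff in Hp as [l [<- Hl]]. split; [exact Hk0|apply HG, Hl].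
  - intros p Hp. apply in_map_iff in Hp as [l [<- Hl]]. split; [exact Hk0x|apply HG, Hl].
  - intros z Hz [y [Hy Hyz]]. destruct (Hcov y Hy) as [l [Hl Hly]].
    apply (proj2 (Hz (k0, l) (in_map _ _ _ Hl))). eauto.
Qed.

Lemma mixed_pd_elem_list (ds : list D) :
  mixed_pd_elem le (down le (fun y => In y ds), up le (fun y => In y ds)).
Proof.
  split; [|split; [|split]].
  - apply scott_closed_down_list.
  - apply lawson_closed_up_list.
  - intros x y [w [Hw Hwx]] Hxy. exists w. eauto.
  - intro x. split.
    + intros [y [Hy Hxy]]. exists y. split; [|exact Hxy].
      split; exists y; split; [exact Hy|apply le_po|exact Hy|apply le_po].
    + intros [w [[Hw _] Hxw]]. destruct Hw as [y [Hy Hwy]]. exists y. eauto.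
Qed.

End DomainFacts.

Section InitialSolution.
Variables (Act D : Type) (le : D -> D -> Prop) (unf : D -> Act -> (D -> Prop) * (D -> Prop)).
Hypothesis le_po : partial_order le.
Hypothesis unf_mixed : forall d a, mixed_pd_elem le (unf d a).
Hypothesis le_unf : forall d e, le d e <-> forall a, mixed_pd_le (unf d a) (unf e a).
Hypothesis le_alg : algebraic le.
Hypothesis unf_onto : forall f : Act -> (D -> Prop) * (D -> Prop),
  (forall a, mixed_pd_elem le (f a)) ->
  exists d, forall a, set_eq (fst (unf d a)) (fst (f a)) /\ set_eq (snd (unf d a)) (snd (f a)).
Hypothesis compact_Kn : forall d, compact le d <-> exists n, Kn le unf n d.

Let le_refl : forall x, le x x := proj1 le_po.
Let le_trans : forall x y z, le x y -> le y z -> le x z := proj1 (proj2 le_po).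
Let le_antisym : forall x y, le x y -> le y x -> x = y := proj2 (proj2 le_po).

Lemma le_fst {d e a x} : le d e -> fst (unf d a) x -> fst (unf e a) x.
Proof. intros Hde. exact (proj1 (proj1 (le_unf d e) Hde a) x). Qed.

Lemma le_snd {d e a x} : le d e -> snd (unf e a) x -> snd (unf d a) x.
Proof. intros Hde. exact (proj2 (proj1 (le_unf d e) Hde a) x). Qed.

Lemma snd_unf_upper {d a x y} : snd (unf d a) x -> le x y -> snd (unf d a) y.
Proof.
  generalize (unf_mixed d a). destruct (unf d a) as [L U]. intros (_ & _ & HU & _).
  apply HU.
Qed.

Lemma fst_unf_down {d a x} :
  fst (unf d a) x -> exists w, (fst (unf d a) w /\ snd (unf d a) w) /\ le x w.
Proof.
  generalize (unf_mixed d a). destruct (unf d a) as [L U]. intros (_ & _ & _ & HL).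
  apply HL.
Qed.

Lemma fst_unf_lower {d a x y} : fst (unf d a) y -> le x y -> fst (unf d a) x.
Proof.
  generalize (unf_mixed d a). destruct (unf d a) as [L U]. intros (_ & _ & _ & HL) Hy Hxy.
  apply HL in Hy as [w [Hw Hyw]]. apply HL. exists w. eauto.
Qed.

Section LTSRefinement.
Variables (St : Type) (R : rel Act St).

Lemma refines_unf s y a :
  refines R R s (DRa unf) (DRc unf) y ->
  (forall s', R s a s' -> exists y', fst (unf y a) y' /\ refines R R s' (DRa unf) (DRc unf) y') /\
  (forall y', snd (unf y a) y' -> exists s', R s a s' /\ refines R R s' (DRa unf) (DRc unf) y').
Proof.
  intros Hsy. apply -> refinesP in Hsy. destruct Hsy as [P [HP Hsy]].
  destruct (HP s y Hsy a) as [Hfwd Hbwd]. split.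
  - intros s' Hs'. destruct (Hfwd s' Hs') as [y' [Hy' HP']].
    exists y'. split; [exact Hy'|]. apply <- refinesP. exists P. auto.
  - intros y' Hy'. destruct (Hbwd y' Hy') as [s' [Hs' HP']].
    exists s'. split; [exact Hs'|]. apply <- refinesP. exists P. auto.
Qed.

Lemma refines_monotone s y z :
  refines R R s (DRa unf) (DRc unf) y -> le y z -> refines R R s (DRa unf) (DRc unf) z.
Proof.
  intros Hsy Hyz. apply <- refinesP.
  exists (fun t w => exists v, refines R R t (DRa unf) (DRc unf) v /\ le v w).
  split; [|exists y; auto].
  intros t w [v [Htv Hvw]] a. destruct (refines_unf a Htv) as [Hfwd Hbwd]. split.
  - intros t' Ht'. destruct (Hfwd t' Ht') as [v' [Hv' Ht'v']].
    exists v'. split; [exact (le_fst Hvw Hv')|exists v'; auto].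
  - intros w' Hw'. destruct (Hbwd w' (le_snd Hvw Hw')) as [t' [Ht' Ht'w']].
    exists t'. split; [exact Ht'|exists w'; auto].
Qed.

(* [refines_upto n x s]: the LTS at [s] refines [(D, x)] up to depth [n]. *)
Fixpoint refines_upto (n : nat) (x : D) (s : St) : Prop :=
  match n with
  | O => True
  | S n => forall a,
      (forall x', fst (unf x a) x' -> exists s', R s a s' /\ refines_upto n x' s') /\
      (forall s', R s a s' -> exists x', snd (unf x a) x' /\ refines_upto n x' s')
  end.

Lemma refines_upto_le {n x y s} : le y x -> refines_upto n x s -> refines_upto n y s.
Proof.
  destruct n as [|n]; [trivial|]. intros Hyx Hxs a. destruct (Hxs a) as [Hfwd Hbwd]. split.
  - intros y' Hy'. exact (Hfwd y' (le_fst Hyx Hy')).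
  - intros s' Hs'. destruct (Hbwd s' Hs') as [x' [Hx' Hx's']].
    exists x'. split; [exact (le_snd Hyx Hx')|exact Hx's'].
Qed.

(* Along an LTS, must and may successors coincide, so [L = ↓(L ∩ U)] transfers
   a refinement of the LTS by [y] into a refinement of [y] by the LTS. *)
Lemma refines_upto_of_refines n s y :
  refines R R s (DRa unf) (DRc unf) y -> refines_upto n y s.
Proof.
  revert s y. induction n as [|n IH]; intros s y Hsy; [exact I|]. intro a.
  destruct (refines_unf a Hsy) as [Hfwd Hbwd]. split.
  - intros y' Hy'. destruct (fst_unf_down Hy') as [w [[_ Uw] Hy'w]].
    destruct (Hbwd w Uw) as [s' [Hs' Hs'w]].
    exists s'. split; [exact Hs'|]. exact (refines_upto_le Hy'w (IH _ _ Hs'w)).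
  - intros s' Hs'. destruct (Hfwd s' Hs') as [y' [Hy' Hs'y']].
    destruct (fst_unf_down Hy') as [w [[_ Uw] Hy'w]].
    exists w. split; [exact Uw|]. exact (IH _ _ (refines_monotone Hs'y' Hy'w)).
Qed.

Lemma Kn_le_of_refines {n k s d} :
  Kn le unf n k -> refines_upto n k s -> refines R R s (DRa unf) (DRc unf) d -> le k d.
Proof.
  revert k s d. induction n as [|n IH]; intros k s d Hk Hks Hsd; [exact (Hk d)|].
  apply le_unf. intro a. destruct (Hk a) as [A [B [HA [HB [HLA HUB]]]]].
  destruct (Hks a) as [Hkfwd Hkbwd]. destruct (refines_unf a Hsd) as [Hdfwd Hdbwd]. split.
  - intros z Hz. apply HLA in Hz as [x [Hx Hzx]].
    assert (Lx : fst (unf k a) x) by (apply HLA; exists x; auto).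
    destruct (Hkfwd x Lx) as [s' [Hs' Hxs']]. destruct (Hdfwd s' Hs') as [d' [Ld' Hs'd']].
    apply (fst_unf_lower Ld'). exact (le_trans Hzx (IH _ _ _ (HA x Hx) Hxs' Hs'd')).
  - intros z Hz. destruct (Hdbwd z Hz) as [s' [Hs' Hs'z]].
    destruct (Hkbwd s' Hs') as [x' [Ux' Hx's']]. apply HUB in Ux' as [b [Hb Hbx']].
    apply HUB. exists b. split; [exact Hb|].
    exact (IH _ _ _ (HB b Hb) (refines_upto_le Hbx' Hx's') Hs'z).
Qed.

Lemma le_of_refines s d e :
  refines R R s (DRa unf) (DRc unf) d -> refines R R s (DRa unf) (DRc unf) e -> le e d.
Proof.
  intros Hsd Hse. apply (proj2 (proj2 (le_alg e))). intros k [Hk Hke].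
  apply compact_Kn in Hk as [n Hn].
  exact (Kn_le_of_refines Hn (refines_upto_le Hke (refines_upto_of_refines n Hse)) Hsd).
Qed.

End LTSRefinement.

Lemma LTS_point_maximal d : is_LTS_point unf d -> maximal le d.
Proof.
  intros [St [R [l [_ [_ Hld]]]]] e Hde.
  apply le_antisym; [exact (le_of_refines Hld (refines_monotone Hld Hde))|exact Hde].
Qed.

(* [tree_point (S n) d]: [d] is the image of a finitely branching synchronisation
   tree of depth at most [n], whose [a]-successors are listed by [ds]. *)
Fixpoint tree_point (n : nat) (d : D) : Prop :=
  match n with
  | O => False
  | S n => forall a, exists ds, (forall y, In y ds -> tree_point n y) /\
      set_eq (fst (unf d a)) (down le (fun y => In y ds)) /\
      set_eq (snd (unf d a)) (up le (fun y => In y ds))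
  end.

Lemma tree_point_maximal {n d} : tree_point n d -> maximal le d.
Proof.
  revert d. induction n as [|n IH]; intros d Hd e Hde; [contradiction|].
  apply le_antisym; [|exact Hde]. apply le_unf. intro a.
  destruct (Hd a) as [ds [Hds [HL HU]]]. split.
  - intros z Hz. destruct (fst_unf_down Hz) as [w [[_ Uw] Hzw]].
    apply (le_snd Hde), HU in Uw as [y [Hy Hyw]]. rewrite (IH y (Hds y Hy) w Hyw) in Hzw.
    apply HL. exists y. auto.
  - intros z Hz. apply HU in Hz as [y [Hy Hyz]]. rewrite (IH y (Hds y Hy) z Hyz).
    assert (Ly : fst (unf e a) y) by (apply (le_fst Hde), HL; exists y; auto).
    destruct (fst_unf_down Ly) as [w [[_ Uw] Hyw]].
    rewrite <- (IH y (Hds y Hy) w Hyw). exact Uw.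
Qed.

Definition finite_tree (d : D) : Prop := exists n, tree_point n d.

(* By maximality of the successors, the upper component [↑ds] is [ds] itself. *)
Lemma finite_tree_unf s a : finite_tree s -> exists ds,
  (forall y, In y ds -> finite_tree y) /\
  set_eq (fst (unf s a)) (down le (fun y => In y ds)) /\
  set_eq (snd (unf s a)) (fun y => In y ds).
Proof.
  intros [[|n] Hs]; [contradiction|]. destruct (Hs a) as [ds [Hds [HL HU]]].
  exists ds. split; [intros y Hy; exists n; exact (Hds y Hy)|split; [exact HL|]].
  intro y. split.
  - intro Uy. apply HU in Uy as [z [Hz Hzy]].
    rewrite (tree_point_maximal (Hds z Hz) Hzy). exact Hz.
  - intro Hy. apply HU. exists y. auto.
Qed.

Definition tree_lts : rel Act D := fun s a s' => finite_tree s /\ snd (unf s a) s'.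

Lemma tree_lts_image_finite : image_finite tree_lts tree_lts.
Proof.
  enough (H : forall s a, finite_set (tree_lts s a)) by (intros s a; split; apply H).
  intros s a. destruct (classic (finite_tree s)) as [Ts|Ts].
  - destruct (finite_tree_unf a Ts) as [ds [_ [_ HU]]].
    exists ds. intros y [_ Uy]. apply HU, Uy.
  - exists []. intros y [Ts' _]. contradiction.
Qed.

Lemma point_refines_tree_lts d :
  finite_tree d -> refines (DRa unf) (DRc unf) d tree_lts tree_lts d.
Proof.
  intros Td. apply <- refinesP. exists (fun x s => finite_tree s /\ le x s).
  split; [|split; [exact Td|apply le_refl]].
  intros x s [Ts Hxs] a. destruct (finite_tree_unf a Ts) as [ds [Hds [HL HU]]]. split.
  - intros x' Hx'. apply (le_fst Hxs), HL in Hx' as [y [Hy Hx'y]].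
    exists y. split; [split; [exact Ts|apply HU, Hy]|split; [apply Hds, Hy|exact Hx'y]].
  - intros s' [_ Us']. exists s'.
    split; [exact (le_snd Hxs Us')|split; [apply Hds, HU, Us'|apply le_refl]].
Qed.

Lemma tree_lts_refines_point d :
  finite_tree d -> refines tree_lts tree_lts d (DRa unf) (DRc unf) d.
Proof.
  intros Td. apply <- refinesP. exists (fun s y => finite_tree s /\ le s y).
  split; [|split; [exact Td|apply le_refl]].
  intros s y [Ts Hsy] a. destruct (finite_tree_unf a Ts) as [ds [Hds [HL HU]]]. split.
  - intros s' [_ Us']. apply HU in Us'. exists s'.
    split; [apply (le_fst Hsy), HL; exists s'; auto|split; [apply Hds, Us'|apply le_refl]].
  - intros y' Uy'. pose proof (le_snd Hsy Uy') as Us'. exists y'.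
    split; [split; [exact Ts|exact Us']|split; [apply Hds, HU, Us'|apply le_refl]].
Qed.

Lemma tree_point_is_LTS_point n d : tree_point n d -> is_LTS_point unf d.
Proof.
  intros Hd. assert (Td : finite_tree d) by (exists n; exact Hd).
  exists D, tree_lts, d. split; [exact tree_lts_image_finite|].
  split; [apply point_refines_tree_lts|apply tree_lts_refines_point]; exact Td.
Qed.

Lemma point_of_lists (g : Act -> list D) : exists d, forall a,
  set_eq (fst (unf d a)) (down le (fun y => In y (g a))) /\
  set_eq (snd (unf d a)) (up le (fun y => In y (g a))).
Proof.
  apply (unf_onto (fun a => (down le (fun y => In y (g a)), up le (fun y => In y (g a))))).
  intro a. exact (mixed_pd_elem_list le_po le_alg (g a)).
Qed.

Section TreeAbove.
Variable n : nat.
Hypothesis Kn_below_tree : forall F : list D,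
  (forall k, In k F -> Kn le unf n k) -> (exists u, upper_bound le (fun k => In k F) u) ->
  exists d, tree_point (S n) d /\ upper_bound le (fun k => In k F) d.
Variables (F : list D) (u : D).
Hypothesis F_Kn : forall k, In k F -> Kn le unf (S n) k.
Hypothesis F_le_u : upper_bound le (fun k => In k F) u.
Variable a : Act.

Definition shared_successor (y : D) : Prop :=
  tree_point (S n) y /\ forall k, In k F -> snd (unf k a) y.

Lemma shared_successor_above x :
  Kn le unf n x -> fst (unf u a) x -> exists y, shared_successor y /\ le x y.
Proof.
  intros Hx Lx. destruct (fst_unf_down Lx) as [w [[_ Uw] Hxw]].
  destruct (list_choice (fun b => Kn le unf n b /\ le b w)
              (fun k b => forall y, le b y -> snd (unf k a) y) F) as [G [HG HFG]].
  { intros k Hk. destruct (F_Kn k Hk a) as [A [B [_ [HB [_ HUB]]]]].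
    apply (le_snd (F_le_u k Hk)), HUB in Uw as [b [Hb Hbw]].
    exists b. split; [split; [apply HB, Hb|exact Hbw]|].
    intros y Hby. apply HUB. exists b. auto. }
  destruct (Kn_below_tree (x :: G)) as [y [Ty Hy]].
  - intros k [<-|Hk]; [exact Hx|apply HG, Hk].
  - exists w. intros k [<-|Hk]; [exact Hxw|apply HG, Hk].
  - exists y. split; [split; [exact Ty|]|apply Hy; left; reflexivity].
    intros k Hk. destruct (HFG k Hk) as [b [Hb Hky]]. apply Hky, Hy. right. exact Hb.
Qed.

Lemma shared_successors_cover : exists ds, (forall y, In y ds -> shared_successor y) /\
  forall k, In k F -> forall z, fst (unf k a) z -> exists y, In y ds /\ le z y.
Proof.
  destruct (list_choice (fun ds => forall y, In y ds -> shared_successor y)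
              (fun k ds => forall z, fst (unf k a) z -> exists y, In y ds /\ le z y) F)
    as [GG [HGG HFGG]].
  { intros k Hk. destruct (F_Kn k Hk a) as [A [B [HA [_ [HLA _]]]]].
    destruct (list_choice shared_successor le A) as [G [HG HAG]].
    { intros x Hx. apply shared_successor_above; [apply HA, Hx|].
      apply (le_fst (F_le_u k Hk)), HLA. exists x. auto. }
    exists G. split; [exact HG|].
    intros z Hz. apply HLA in Hz as [x [Hx Hzx]]. destruct (HAG x Hx) as [y [Hy Hxy]].
    exists y. eauto. }
  exists (concat GG). split.
  - intros y Hy. apply in_concat in Hy as [ds [Hds Hy]]. exact (HGG ds Hds y Hy).
  - intros k Hk z Hz. destruct (HFGG k Hk) as [ds [Hds Hcov]].
    destruct (Hcov z Hz) as [y [Hy Hzy]]. exists y. split; [|exact Hzy].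
    apply in_concat. exists ds. auto.
Qed.

End TreeAbove.

Lemma Kn_lists_below_tree n (F : list D) :
  (forall k, In k F -> Kn le unf n k) -> (exists u, upper_bound le (fun k => In k F) u) ->
  exists d, tree_point (S n) d /\ upper_bound le (fun k => In k F) d.
Proof.
  revert F. induction n as [|n IH]; intros F HF [u Hu].
  - destruct (point_of_lists (fun _ => [])) as [d Hd]. exists d. split.
    + intro a. exists []. split; [intros y []|apply Hd].
    + intros k Hk. exact (HF k Hk d).
  - destruct (choice _ (shared_successors_cover IH F HF Hu)) as [g Hg].
    destruct (point_of_lists g) as [d Hd]. exists d. split.
    + intro a. exists (g a). split; [|apply Hd]. intros y Hy. exact (proj1 (proj1 (Hg a) y Hy)).
    + intros k Hk. apply le_unf. intro a.
      destruct (Hg a) as [Hsucc Hcov]. destruct (Hd a) as [HL HU]. split.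
      * intros z Hz. apply HL. destruct (Hcov k Hk z Hz) as [y [Hy Hzy]]. exists y. auto.
      * intros z Hz. apply HU in Hz as [y [Hy Hyz]].
        exact (snd_unf_upper (proj2 (Hsucc y Hy) k Hk) Hyz).
Qed.

End InitialSolution.

Theorem proposition3p14 (Act : Type) (D : Type) (le : D -> D -> Prop)
    (unf : D -> Act -> (D -> Prop) * (D -> Prop)) :
  finite_type Act ->
  is_initial_solution le unf ->
  (* {[L,l]} is a subset of X = max(D) *)
  (forall d, is_LTS_point unf d -> maximal le d) /\
  (* and it is dense in (X, tau_X): every nonempty open U ∩ X meets it *)
  (forall U : D -> Prop, scott_open le U ->
     (exists x, maximal le x /\ U x) ->
     exists d, is_LTS_point unf d /\ U d).
Proof.
  intros _ [[le_po [_ [le_alg _]]] [unf_mixed [unf_onto [le_unf compact_Kn]]]].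
  split.
  - exact (LTS_point_maximal le_po unf_mixed le_unf le_alg compact_Kn).
  - intros U HU [x [_ Ux]].
    apply HU in Ux as [k [[Uk Hk] Hkx]]. apply compact_Kn in Hk as [n Hn].
    destruct (Kn_lists_below_tree unf le_po unf_mixed le_unf le_alg unf_onto n [k])
      as [d [Hd Hkd]].
    + intros k' [<-|[]]. exact Hn.
    + exists x. intros k' [<-|[]]. exact Hkx.
    + exists d. split.
      * exact (tree_point_is_LTS_point unf le_po unf_mixed le_unf (S n) d Hd).
      * apply HU. exists k. split; [split; [exact Uk|apply compact_Kn; exists n; exact Hn]|].
        apply Hkd. left. reflexivity.
Qed.
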